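(* Let $d\ge 1$ and let $G_A=(V_A,E_A)$, $G_B=(V_B,E_B)$ be graphs that are universally rigid in $\mathbb{R}^d$. Let $\mathbf{p}^A$, $\mathbf{p}^B$ be configurations in general position in $\mathbb{R}^d$ of $G_A$, $G_B$, with $V_C=V_A\cap V_B$ a proper subset of both $V_A$ and $V_B$, $|V_C|\ge d+1$, and $\mathbf{p}^A_i=\mathbf{p}^B_i$ for $i\in V_C$. If both $G_A(\mathbf{p}^A)$ and $G_B(\mathbf{p}^B)$ have positive semidefinite stress matrices of nullity $d+1$, then their edge-reduced framework attachment (the framework with graph $(V_A\cup V_B,(E_A\cup E_B)\setminus F)$, where $F$ is the set of edges of $E_B\setminus E_A$ with both endpoints in $V_C$, and configuration $\mathbf{p}$ with $\mathbf{p}_i=\mathbf{p}^A_i$ for $i\in V_A$, $\mathbf{p}_i=\mathbf{p}^B_i$ for $i\in V_B$) also has a positive semidefinite stress matrix of nullity $d+1$.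
   Context: A framework $G(\mathbf{p})$ in $\mathbb{R}^d$ is a finite graph $G=(V,E)$ with points $\mathbf{p}_i\in\mathbb{R}^d$; general position means any $d+1$ distinct vertices have affinely independent points. $G(\mathbf{p})$ is universally rigid if for every $d'\ge d$, every configuration $\mathbf{q}$ in $\mathbb{R}^{d'}$ with $\|\mathbf{q}_i-\mathbf{q}_j\|=\|\mathbf{p}_i-\mathbf{p}_j\|$ for all edges satisfies the same equality for all pairs of vertices. A graph is universally rigid in $\mathbb{R}^d$ if every framework of it in general position in $\mathbb{R}^d$ is universally rigid. A stress matrix of $G(\mathbf{p})$ is a real $|V|\times|V|$ matrix $\Omega$ with: $\Omega_{ij}=\Omega_{ji}$; $\Omega_{ij}=0$ whenever $i\ne j$, $\{i,j\}\notin E$; $\sum_j\Omega_{ij}=0$ and $\sum_j\Omega_{ij}\mathbf{p}_j=0$ for all $i$. Nullity means $\dim\ker$. *)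

From HB Require Import structures.
From mathcomp Require Import all_boot all_order all_algebra.
From mathcomp Require Import reals.
Set Implicit Arguments. Unset Strict Implicit. Unset Printing Implicit Defensive.
Import Order.TTheory GRing.Theory Num.Theory.
Local Open Scope ring_scope.

(* Vertices live in an ambient finite type T.  A graph is a pair (V, E) with
   V : {set T} and E : {set {set T}} whose elements are 2-element subsets of V. *)
Definition is_graph (T : finType) (V : {set T}) (E : {set {set T}}) : Prop :=
  forall e, e \in E -> #|e| = 2%N /\ e \subset V.

Definition sqdist (R : realType) (k : nat) (u v : 'rV[R]_k) : R :=
  \sum_(l < k) (u 0 l - v 0 l) ^+ 2.

Definition aff_indep (R : realType) (T : finType) (d : nat)
  (p : T -> 'rV[R]_d) (S : {set T}) : Prop :=
  forall lam : T -> R,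
    \sum_(i in S) lam i = 0 -> \sum_(i in S) lam i *: p i = 0 ->
    forall i, i \in S -> lam i = 0.

Definition general_position (R : realType) (T : finType) (d : nat)
  (V : {set T}) (p : T -> 'rV[R]_d) : Prop :=
  forall S : {set T}, S \subset V -> #|S| = d.+1 -> aff_indep p S.

Definition univ_rigid_fw (R : realType) (T : finType) (d : nat)
  (V : {set T}) (E : {set {set T}}) (p : T -> 'rV[R]_d) : Prop :=
  forall (d' : nat) (q : T -> 'rV[R]_d'), (d <= d')%N ->
    (forall i j, i \in V -> j \in V -> [set i; j] \in E ->
       sqdist (q i) (q j) = sqdist (p i) (p j)) ->
    forall i j, i \in V -> j \in V -> sqdist (q i) (q j) = sqdist (p i) (p j).

Definition univ_rigid_graph (R : realType) (T : finType) (d : nat)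
  (V : {set T}) (E : {set {set T}}) : Prop :=
  forall p : T -> 'rV[R]_d, general_position V p -> univ_rigid_fw V E p.

(* the i-th vertex of V, i : 'I_#|V|  (rows/columns of a |V| x |V| matrix) *)
Definition vtx (T : finType) (V : {set T}) (i : 'I_#|V|) : T := enum_val i.

Definition stress_matrix (R : realType) (T : finType) (d : nat)
  (V : {set T}) (E : {set {set T}}) (p : T -> 'rV[R]_d)
  (Om : 'M[R]_#|V|) : Prop :=
  [/\ forall i j, Om i j = Om j i,
      forall i j, i != j -> [set vtx i; vtx j] \notin E -> Om i j = 0,
      forall i, \sum_j Om i j = 0 &
      forall i, \sum_j Om i j *: p (vtx j) = 0].

Definition psd (R : realType) (n : nat) (M : 'M[R]_n) : Prop :=
  forall x : 'cV[R]_n, 0 <= (x^T *m M *m x) 0 0.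

Definition nullity (R : realType) (n : nat) (M : 'M[R]_n) : nat :=
  \rank (kermx M).

Definition has_psd_stress_nullity (R : realType) (T : finType) (d : nat)
  (V : {set T}) (E : {set {set T}}) (p : T -> 'rV[R]_d) (k : nat) : Prop :=
  exists Om : 'M[R]_#|V|, [/\ @stress_matrix R T d V E p Om, psd Om & nullity Om = k].

Definition removed_edges (T : finType) (VA VB : {set T}) (EA EB : {set {set T}})
  : {set {set T}} :=
  [set e in EB | (e \notin EA) && (e \subset VA :&: VB)].

Definition attach_edges (T : finType) (VA VB : {set T}) (EA EB : {set {set T}})
  : {set {set T}} :=
  (EA :|: EB) :\: removed_edges VA VB EA EB.

Definition attach_config (R : realType) (T : finType) (d : nat) (VA : {set T})
  (pA pB : T -> 'rV[R]_d) : T -> 'rV[R]_d :=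
  fun i => if i \in VA then pA i else pB i.

(* Choose d + 1 common vertices S; by general position they are affinely independent
   in both frameworks. View the two stresses as weight functions wA, wB on all
   vertices; their kernels are exactly the affine functions of p^A on V_A, resp. of
   p^B on V_B. The sum wA + wB uses the deleted edges F, so it is corrected by a
   stress C of p^A supported on E_A and F which cancels wB on F: such a C exists
   because G_A(p^A), being universally rigid, is infinitesimally rigid. C annihilates
   the affine functions, hence the kernel of wA, so C + K wA is PSD for K large. Then (K + 1) wA + wB + C is
   a PSD stress of the attachment, and a vector in its kernel lies in the kernels of
   wA and wB, i.e. is affine on V_A and on V_B; the two affine maps agree on S, so
   the kernel has dimension d + 1. *)

From HB Require Import structures.
From mathcomp Require Import all_boot all_order all_algebra.
From mathcomp Require Import reals.
From mathcomp Require Import ring lra.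
Import Order.TTheory GRing.Theory Num.Theory.
Local Open Scope ring_scope.
Set Implicit Arguments. Unset Strict Implicit. Unset Printing Implicit Defensive.

Lemma quadratic_ge0_discr (R : realType) (a b c : R) : 0 <= c ->
  (forall s, 0 <= a + s * b * 2 + s ^+ 2 * c) -> b ^+ 2 <= a * c.
Proof.
move=> c0 H; have [ce|cn0] := eqVneq c 0.
  rewrite ce in H *.
  have [->|bn0] := eqVneq b 0; first by rewrite expr0n /= mulr0.
  have := H (- (a + 1) / (b * 2)).
  have -> : - (a + 1) / (b * 2) * b * 2 = - (a + 1) by field.
  rewrite mulr0; lra.
have cp : 0 < c by rewrite lt_def cn0.
have := mulr_ge0 c0 (H (- b / c)).
have -> : c * (a + - b / c * b * 2 + (- b / c) ^+ 2 * c) = a * c - b ^+ 2 by field.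
by rewrite subr_ge0.
Qed.

Lemma sum_delta (R : realType) (I : finType) (F : I -> R) (i : I) :
  \sum_j F j * (j == i)%:R = F i.
Proof.
rewrite (bigD1 i) //= eqxx mulr1 big1 ?addr0 // => j /negbTE ->.
by rewrite mulr0.
Qed.

Lemma sum_deltaZ (R : realType) (U : lmodType R) (I : finType) (f : I -> U) (i : I) :
  \sum_j (i == j)%:R *: f j = f i.
Proof.
rewrite (bigD1 i) //= eqxx scale1r big1 ?addr0 // => j.
by rewrite eq_sym => /negbTE ->; rewrite scale0r.
Qed.

Section BilinearForms.
Variables (R : realType) (I : finType).
Implicit Types (M : I -> I -> R) (u v w x : I -> R).

Definition bilin M u v : R := \sum_i \sum_j u i * M i j * v j.

Definition psd_form M : Prop := forall x, 0 <= bilin M x x.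

Lemma eq_bilin M u u' v v' : u =1 u' -> v =1 v' -> bilin M u v = bilin M u' v'.
Proof.
by move=> eu ev; apply: eq_bigr => i _; apply: eq_bigr => j _; rewrite eu ev.
Qed.

Lemma bilinDl M u v w s :
  bilin M (fun i => u i + s * v i) w = bilin M u w + s * bilin M v w.
Proof.
rewrite /bilin mulr_sumr -big_split; apply: eq_bigr => i _.
rewrite mulr_sumr -big_split; apply: eq_bigr => j _ /=; ring.
Qed.

Lemma bilinDr M u v w s :
  bilin M w (fun i => u i + s * v i) = bilin M w u + s * bilin M w v.
Proof.
rewrite /bilin mulr_sumr -big_split; apply: eq_bigr => i _.
rewrite mulr_sumr -big_split; apply: eq_bigr => j _ /=; ring.
Qed.

Lemma bilin_addM M1 M2 u v :
  bilin (fun i j => M1 i j + M2 i j) u v = bilin M1 u v + bilin M2 u v.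
Proof.
rewrite /bilin -big_split; apply: eq_bigr => i _.
rewrite -big_split; apply: eq_bigr => j _ /=; ring.
Qed.

Lemma bilin_scaleM c M u v : bilin (fun i j => c * M i j) u v = c * bilin M u v.
Proof.
rewrite /bilin mulr_sumr; apply: eq_bigr => i _.
rewrite mulr_sumr; apply: eq_bigr => j _ /=; ring.
Qed.

Lemma bilin_diag M x : bilin M x x = \sum_i x i * \sum_j M i j * x j.
Proof.
apply: eq_bigr => i _; rewrite mulr_sumr; apply: eq_bigr => j _; ring.
Qed.

Section Symmetric.
Variable M : I -> I -> R.
Hypothesis Msym : forall i j, M i j = M j i.

Lemma bilinC u v : bilin M u v = bilin M v u.
Proof.
rewrite /bilin exchange_big; apply: eq_bigr => i _.
by apply: eq_bigr => j _; rewrite Msym; ring.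
Qed.

Lemma bilin_delta u i : bilin M u (fun j => (j == i)%:R) = \sum_j M i j * u j.
Proof. by apply: eq_bigr => j _; rewrite sum_delta Msym mulrC. Qed.

Hypothesis Mpsd : psd_form M.

Lemma bilin_CauchySchwarz u v : bilin M u v ^+ 2 <= bilin M u u * bilin M v v.
Proof.
apply: quadratic_ge0_discr => // s.
have := Mpsd (fun i => u i + s * v i).
rewrite bilinDl !bilinDr (bilinC v u).
suff -> : bilin M u u + s * bilin M u v * 2 + s ^+ 2 * bilin M v v =
  bilin M u u + s * bilin M u v + s * (bilin M u v + s * bilin M v v) by [].
ring.
Qed.

Lemma psd_form_ker x : bilin M x x = 0 -> forall i, \sum_j M i j * x j = 0.
Proof.
move=> x0 i; have := bilin_CauchySchwarz x (fun j => (j == i)%:R).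
rewrite x0 mul0r bilin_delta => h.
have : (\sum_j M i j * x j) ^+ 2 = 0 by apply/le_anti; rewrite h sqr_ge0.
by move/eqP; rewrite sqrf_eq0 => /eqP.
Qed.

End Symmetric.
End BilinearForms.

Section MatrixForms.
Variables (R : realType) (n : nat).
Implicit Types (A C : 'M[R]_n) (u v : 'I_n -> R).

Lemma bilin_mx A u v : bilin A u v = ((\col_i u i)^T *m A *m \col_i v i) 0 0.
Proof.
rewrite /bilin mxE exchange_big; apply: eq_bigr => j _.
rewrite !mxE mulr_suml; apply: eq_bigr => i _; by rewrite !mxE.
Qed.

Lemma psd_formE A : psd A <-> psd_form A.
Proof.
split=> Ap x; first by rewrite bilin_mx; apply: Ap.
have -> : x = \col_i x i 0 by apply/matrixP => i j; rewrite (ord1 j) mxE.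
by rewrite -bilin_mx.
Qed.

Definition sqnorm u := \sum_i u i ^+ 2.

Lemma sqnorm_ge0 u : 0 <= sqnorm u.
Proof. by apply: sumr_ge0 => i _; rewrite sqr_ge0. Qed.

Lemma sqr_le_sqnorm u i : u i ^+ 2 <= sqnorm u.
Proof.
rewrite /sqnorm (bigD1 i) //= lerDl; apply: sumr_ge0 => j _; exact: sqr_ge0.
Qed.

Definition mx_l1 A := \sum_i \sum_j `|A i j|.

Lemma mx_l1_ge0 A : 0 <= mx_l1 A.
Proof. by apply: sumr_ge0 => i _; apply: sumr_ge0 => j _; exact: normr_ge0. Qed.

Lemma bilin_bound A u : `|bilin A u u| <= mx_l1 A * sqnorm u.
Proof.
rewrite /bilin /mx_l1 mulr_suml; apply: le_trans (ler_norm_sum _ _ _) _.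
apply: ler_sum => i _; rewrite mulr_suml; apply: le_trans (ler_norm_sum _ _ _) _.
apply: ler_sum => j _.
rewrite mulrAC normrM [X in _ <= X]mulrC ler_wpM2r // normrM.
have hi := sqr_le_sqnorm u i; have hj := sqr_le_sqnorm u j.
rewrite -(real_normK (num_real (u i))) in hi.
rewrite -(real_normK (num_real (u j))) in hj.
have := sqr_ge0 (`|u i| - `|u j|); rewrite sqrrB; lra.
Qed.

(* The kernel inclusion puts the rows of C in the row space of A, so C = X A = A X^T
   with X := C pinv(A), whence C = A (X^T pinv(A)) A. *)
Lemma mx_factor_of_ker_sub A C : A^T = A -> C^T = C ->
  (forall v : 'cV_n, A *m v = 0 -> C *m v = 0) -> exists E, C = A *m E *m A.
Proof.
move=> AT CT AC.
have sCA : (C <= A)%MS.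
  rewrite submxE; apply/eqP/matrixP => i j.
  have Acol : A *m col j (cokermx A) = 0.
    by rewrite colE mulmxA mulmx_coker mul0mx.
  by have /(congr1 (fun v : 'cV_n => v i 0)) := AC _ Acol; rewrite colE mulmxA -colE !mxE.
exists ((C *m pinvmx A)^T *m pinvmx A).
have CA := mulmxKpV sCA.
have CAT : C = A *m (C *m pinvmx A)^T by rewrite -{1}CT -{1}CA trmx_mul AT.
by rewrite -{1}CA {1}CAT !mulmxA.
Qed.

(* With w := A x, x^T C x = w^T E w >= - |E|_1 |w|^2, and Cauchy-Schwarz for A on
   |w|^2 = x^T A w yields |w|^2 <= |A|_1 x^T A x. *)
Lemma psd_mx_dominates A C : A^T = A -> C^T = C -> psd_form A ->
  (forall v : 'cV_n, A *m v = 0 -> C *m v = 0) ->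
  exists K, forall x, - (K * bilin A x x) <= bilin C x x.
Proof.
move=> AT CT Ap AC; have [E eC] := mx_factor_of_ker_sub AT CT AC.
have Asym i j : A i j = A j i by rewrite -{1}AT mxE.
exists (mx_l1 E * mx_l1 A) => x.
set w := fun i => (A *m \col_i x i) i 0.
have colw : \col_i w i = A *m \col_i x i by apply/matrixP => i j; rewrite (ord1 j) mxE.
have xAw : (\col_i x i)^T *m A = (\col_i w i)^T by rewrite colw trmx_mul AT.
have eCw : bilin C x x = bilin E w w.
  by rewrite !bilin_mx eC !mulmxA xAw -(mulmxA _ A) -colw.
have eAw : bilin A x w = sqnorm w.
  rewrite bilin_mx xAw mxE; apply: eq_bigr => i _; by rewrite !mxE expr2.
have cs := bilin_CauchySchwarz Asym Ap x w; rewrite eAw in cs.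
have hA : bilin A w w <= mx_l1 A * sqnorm w := le_trans (ler_norm _) (bilin_bound A w).
have w0 := sqnorm_ge0 w; have q0 := Ap x; have kA0 := mx_l1_ge0 A.
have hw : sqnorm w <= mx_l1 A * bilin A x x.
  have [->|wn0] := eqVneq (sqnorm w) 0; first by rewrite mulr_ge0.
  have wp : 0 < sqnorm w by rewrite lt_def wn0 w0.
  rewrite -(ler_pM2r wp) -expr2; apply: le_trans cs (le_trans (ler_wpM2l q0 hA) _).
  by rewrite mulrCA mulrA.
have := bilin_bound E w; rewrite ler_norml eCw => /andP[+ _].
have := ler_wpM2l (mx_l1_ge0 E) hw; rewrite mulrA; lra.
Qed.

End MatrixForms.

Lemma sum_vtx (U : zmodType) (T : finType) (V : {set T}) (F : T -> U) :
  (forall i, i \notin V -> F i = 0) -> \sum_i F i = \sum_(a < #|V|) F (vtx a).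
Proof.
move=> F0; rewrite /vtx -big_enum_val [RHS]big_mkcond.
by apply: eq_bigr => i _; case: ifP => // /negbT /F0.
Qed.

Section VertexMatrices.
Variables (R : realType) (T : finType) (V : {set T}).
Implicit Types (w : T -> T -> R) (x y : T -> R) (Om : 'M[R]_#|V|).

Definition vtx_pick (i : T) : option 'I_#|V| := [pick a | vtx a == i].

Lemma vtx_pick_vtx a : vtx_pick (vtx a) = Some a.
Proof.
rewrite /vtx_pick; case: pickP => [b /eqP /enum_val_inj -> // | /(_ a)].
by rewrite eqxx.
Qed.

Lemma vtx_pick_notin i : i \notin V -> vtx_pick i = None.
Proof.
by move=> iV; rewrite /vtx_pick; case: pickP => // a /eqP ai; rewrite -ai enum_valP in iV.
Qed.

Lemma vtx_pickK i a : vtx_pick i = Some a -> vtx a = i.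
Proof. by rewrite /vtx_pick; case: pickP => // b /eqP <- [<-]. Qed.

Definition mx_of_form w : 'M[R]_#|V| := \matrix_(a, b) w (vtx a) (vtx b).

Definition form_of_mx Om : T -> T -> R := fun i j =>
  if vtx_pick i is Some a then if vtx_pick j is Some b then Om a b else 0 else 0.

Definition row_ext (z : 'rV[R]_#|V|) : T -> R :=
  fun i => if vtx_pick i is Some a then z 0 a else 0.

Lemma form_of_mx_vtx Om a b : form_of_mx Om (vtx a) (vtx b) = Om a b.
Proof. by rewrite /form_of_mx !vtx_pick_vtx. Qed.

Lemma form_of_mx_notin Om i j : i \notin V -> form_of_mx Om i j = 0.
Proof. by move=> iV; rewrite /form_of_mx vtx_pick_notin. Qed.

Lemma form_of_mxK Om : mx_of_form (form_of_mx Om) = Om.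
Proof. by apply/matrixP => a b; rewrite mxE form_of_mx_vtx. Qed.

Lemma row_ext_vtx z a : row_ext z (vtx a) = z 0 a.
Proof. by rewrite /row_ext vtx_pick_vtx. Qed.

Lemma row_extK z : \row_a row_ext z (vtx a) = z.
Proof. by apply/rowP => a; rewrite mxE row_ext_vtx. Qed.

Section SupportedForm.
Variable w : T -> T -> R.
Hypotheses (wsym : forall i j, w i j = w j i) (wV : forall i j, i \notin V -> w i j = 0).

Lemma trmx_mx_of_form : (mx_of_form w)^T = mx_of_form w.
Proof. by apply/matrixP => a b; rewrite !mxE wsym. Qed.

Lemma bilin_mx_of_form x y :
  bilin w x y = bilin (mx_of_form w) (fun a => x (vtx a)) (fun a => y (vtx a)).
Proof.
rewrite /bilin (sum_vtx (V := V)) => [|i iV]; last by apply: big1 => j _; rewrite wV // mulr0 mul0r.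
apply: eq_bigr => a _; rewrite (sum_vtx (V := V)) => [|j jV]; last by rewrite wsym wV // mulr0 mul0r.
by apply: eq_bigr => b _; rewrite mxE.
Qed.

Lemma mulmx_row_mx_of_form x a :
  ((\row_b x (vtx b)) *m mx_of_form w) 0 a = \sum_j w (vtx a) j * x j.
Proof.
rewrite mxE [RHS](sum_vtx (V := V)) => [|j jV]; last by rewrite wsym wV ?mul0r.
by apply: eq_bigr => b _; rewrite !mxE wsym mulrC.
Qed.

Lemma psd_mx_of_form : psd_form (mx_of_form w) <-> psd_form w.
Proof.
split=> wp x; first by rewrite bilin_mx_of_form.
have ex : x =1 fun a => row_ext (\row_b x b) (vtx a) by move=> a; rewrite row_ext_vtx mxE.
by rewrite (eq_bilin _ ex ex) -bilin_mx_of_form.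
Qed.

Lemma mx_of_form_ker z :
  z *m mx_of_form w = 0 <-> forall i, \sum_j w i j * row_ext z j = 0.
Proof.
rewrite -{1}(row_extK z); split => [zw i | wz].
  case iV: (i \in V); last by apply: big1 => j _; rewrite wV ?mul0r // iV.
  by rewrite -(enum_rankK_in iV iV) -mulmx_row_mx_of_form zw mxE.
by apply/rowP => a; rewrite mulmx_row_mx_of_form wz mxE.
Qed.

End SupportedForm.

Lemma psd_form_dominates w C :
  (forall i j, w i j = w j i) -> (forall i j, i \notin V -> w i j = 0) ->
  (forall i j, C i j = C j i) -> (forall i j, i \notin V -> C i j = 0) -> psd_form w ->
  (forall x, (forall i, \sum_j w i j * x j = 0) -> forall i, \sum_j C i j * x j = 0) ->
  exists K, forall x, - (K * bilin w x x) <= bilin C x x.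
Proof.
move=> wsym wV Csym CV wp wC.
have mxC : forall v : 'cV_#|V|, mx_of_form w *m v = 0 -> mx_of_form C *m v = 0.
  move=> v /(congr1 trmx); rewrite trmx_mul trmx_mx_of_form // trmx0.
  move/(mx_of_form_ker wsym wV) => wv.
  apply: trmx_inj; rewrite trmx_mul trmx_mx_of_form // trmx0.
  by apply/(mx_of_form_ker Csym CV) => i; apply: wC.
have [K hK] := psd_mx_dominates (trmx_mx_of_form wsym) (trmx_mx_of_form Csym)
  ((psd_mx_of_form wsym wV).2 wp) mxC.
by exists K => x; rewrite (bilin_mx_of_form wsym wV) (bilin_mx_of_form Csym CV).
Qed.

End VertexMatrices.

Section EnumNth.
Variables (T : finType) (x0 : T) (S : {set T}) (d : nat).
Hypothesis cardS : #|S| = d.+1.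

Definition enum_nth (a : nat) : T := nth x0 (enum S) a.

Lemma enum_nth_in (a : 'I_d.+1) : enum_nth a \in S.
Proof. by rewrite /enum_nth -mem_enum mem_nth // -cardE cardS. Qed.

Lemma sum_enum_nth (U : zmodType) (F : T -> U) :
  \sum_(i in S) F i = \sum_(a < d.+1) F (enum_nth a).
Proof.
rewrite -big_enum (big_nth x0) -cardE cardS big_mkord.
by apply: eq_bigr.
Qed.

Lemma enum_nth_index i : i \in S -> enum_nth (@inord d (index i (enum S))) = i.
Proof.
move=> iS; rewrite /enum_nth inordK ?nth_index ?mem_enum //.
by rewrite -cardS cardE index_mem mem_enum.
Qed.

Lemma index_enum_nth (a : 'I_d.+1) : @inord d (index (enum_nth a) (enum S)) = a.
Proof.
apply/val_inj => /=; rewrite /enum_nth index_uniq ?enum_uniq ?inordK //.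
by rewrite -cardE cardS.
Qed.

End EnumNth.

Section AffineMaps.
Variables (R : realType) (T : finType) (d : nat).
Implicit Types (p : T -> 'rV[R]_d) (S V : {set T}).

Definition aff (a : R) (b : 'rV[R]_d) p (i : T) : R := a + \sum_k b 0 k * p i 0 k.

Lemma aff_sub a b a' b' p i : aff a b p i - aff a' b' p i = aff (a - a') (b - b') p i.
Proof.
rewrite /aff opprD addrACA -sumrB; congr (_ + _); apply: eq_bigr => k _.
by rewrite !mxE mulrBl.
Qed.

Lemma equilibrium_aff (w : T -> T -> R) p a b :
  (forall i, \sum_j w i j = 0) -> (forall i, \sum_j w i j *: p j = 0) ->
  forall i, \sum_j w i j * aff a b p j = 0.
Proof.
move=> w1 w2 i; rewrite /aff.
transitivity (a * \sum_j w i j + \sum_k b 0 k * (\sum_j w i j *: p j) 0 k).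
  rewrite mulr_sumr.
  under [X in _ = _ + X]eq_bigr => k _ do rewrite summxE mulr_sumr.
  rewrite exchange_big -big_split; apply: eq_bigr => j _ /=.
  rewrite mulrDr mulr_sumr; congr (_ + _); first by rewrite mulrC.
  by apply: eq_bigr => k _; rewrite mxE; ring.
by rewrite w1 w2 mulr0 add0r big1 // => k _; rewrite mxE mulr0.
Qed.

Definition aff_mx (x0 : T) S p : 'M[R]_(d.+1, 1 + d) :=
  row_mx (const_mx 1) (\matrix_(a, k) p (enum_nth x0 S a) 0 k).

Lemma aff_indep_mxP x0 S p : #|S| = d.+1 -> aff_indep p S <-> row_free (aff_mx x0 S p).
Proof.
move=> cS; split.
  move=> ind; apply: inj_row_free => v; rewrite mul_mx_row => /eqP; rewrite row_mx_eq0.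
  case/andP => /eqP v1 /eqP vp.
  pose lam i := v 0 (@inord d (index i (enum S))).
  have lam1 : \sum_(i in S) lam i = 0.
    rewrite (sum_enum_nth x0 cS).
    transitivity ((v *m (const_mx 1 : 'M[R]_(d.+1, 1))) 0 0); last by rewrite v1 mxE.
    by rewrite mxE; apply: eq_bigr => a _; rewrite /lam index_enum_nth // mxE mulr1.
  have lamp : \sum_(i in S) lam i *: p i = 0.
    apply/rowP => k; rewrite summxE [RHS]mxE (sum_enum_nth x0 cS).
    transitivity ((v *m \matrix_(s, k) p (enum_nth x0 S s) 0 k) 0 k); last by rewrite vp mxE.
    by rewrite mxE; apply: eq_bigr => a _; rewrite /lam index_enum_nth // !mxE.
  apply/rowP => s; rewrite mxE.
  by have := ind lam lam1 lamp _ (enum_nth_in x0 cS s); rewrite /lam index_enum_nth.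
move=> fr lam lam1 lamp.
pose v := \row_(a < d.+1) lam (enum_nth x0 S a).
have v0 : v = 0.
  apply/eqP; rewrite -(mulmx_free_eq0 _ fr) mul_mx_row row_mx_eq0.
  apply/andP; split; apply/eqP/rowP => k; rewrite !mxE.
    rewrite -[RHS]lam1 (sum_enum_nth x0 cS); apply: eq_bigr => a _; by rewrite !mxE mulr1.
  transitivity ((\sum_(i in S) lam i *: p i) 0 k); last by rewrite lamp mxE.
  rewrite summxE (sum_enum_nth x0 cS); apply: eq_bigr => a _; by rewrite !mxE.
move=> i iS; have := congr1 (fun M : 'rV_d.+1 => M 0 (@inord d (index i (enum S)))) v0.
by rewrite /= !mxE enum_nth_index.
Qed.

Lemma aff_eq0 S p a b : #|S| = d.+1 -> aff_indep p S ->
  (forall i, i \in S -> aff a b p i = 0) -> a = 0 /\ b = 0.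
Proof.
move=> cS ind ab0.
have [x0 x0S] : exists x0, x0 \in S by apply/card_gt0P; rewrite cS.
have := (aff_indep_mxP x0 p cS).1 ind; rewrite row_free_unit => Mu.
set c : 'rV_(1 + d) := row_mx (const_mx a) b.
have Mc : aff_mx x0 S p *m c^T = 0.
  apply/colP => s; rewrite tr_row_mx mul_row_col !mxE big_ord1 !mxE mul1r.
  rewrite -[RHS](ab0 _ (enum_nth_in x0 cS s)) /aff; congr (_ + _).
  by apply: eq_bigr => k _; rewrite !mxE mulrC.
have /eqP : c = 0 by apply: trmx_inj; rewrite -(mulKmx Mu c^T) Mc mulmx0 trmx0.
rewrite row_mx_eq0 => /andP[/eqP/rowP/(_ 0) + /eqP ->]; rewrite !mxE => ->.
by split.
Qed.

Definition affine_basis V p : 'M[R]_(1 + d, #|V|) :=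
  col_mx (const_mx 1) (\matrix_(k, a) p (vtx a) 0 k).

Lemma affine_basis_mul V p (c : 'rV_(1 + d)) a :
  (c *m affine_basis V p) 0 a = aff (lsubmx c 0 0) (rsubmx c) p (vtx a).
Proof.
rewrite -{1}[c]hsubmxK mul_row_col !mxE big_ord1 !mxE mulr1 /aff.
congr (_ + _); apply: eq_bigr => k _; by rewrite !mxE.
Qed.

Lemma sub_affine_basisP V p (z : 'rV_#|V|) :
  (z <= affine_basis V p)%MS <-> exists a b, forall c, z 0 c = aff a b p (vtx c).
Proof.
split=> [/submxP[c ->] | [a [b zab]]].
  by exists (lsubmx c 0 0), (rsubmx c) => c'; apply: affine_basis_mul.
have -> : z = row_mx (const_mx a) b *m affine_basis V p.
  apply/rowP => c; rewrite affine_basis_mul row_mxKl row_mxKr zab; by rewrite mxE.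
exact: submxMl.
Qed.

Lemma affine_basis_free V S p :
  S \subset V -> #|S| = d.+1 -> aff_indep p S -> row_free (affine_basis V p).
Proof.
move=> SV cS ind; apply: inj_row_free => c c0.
have [|ca cb] := @aff_eq0 S p (lsubmx c 0 0) (rsubmx c) cS ind.
  move=> i iS; have iV := subsetP SV _ iS.
  by have := affine_basis_mul p c (enum_rank_in iV i); rewrite c0 mxE /vtx enum_rankK_in.
rewrite -[c]hsubmxK cb.
have -> : lsubmx c = 0 by apply/rowP => z; rewrite (ord1 z) ca mxE.
by rewrite row_mx0.
Qed.

End AffineMaps.

Section Stresses.
Variables (R : realType) (T : finType) (d : nat).
Implicit Types (V S : {set T}) (E : {set {set T}}) (p : T -> 'rV[R]_d) (w : T -> T -> R).

(* Stresses are weight functions on all of T vanishing outside V rather than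
   |V| x |V| matrices, so that stresses on V_A, V_B and V_A :|: V_B can be added. *)
Definition stress_fun V E p w : Prop :=
  [/\ forall i j, w i j = w j i,
      forall i j, i \notin V -> w i j = 0,
      forall i j, i != j -> [set i; j] \notin E -> w i j = 0,
      forall i, \sum_j w i j = 0 &
      forall i, \sum_j w i j *: p j = 0].

(* Affine functions of p always lie in the kernel of a stress, so for p in general
   position this says that the nullity is d + 1. *)
Definition ker_affine V p w : Prop :=
  forall x, (forall i, \sum_j w i j * x j = 0) ->
  exists a b, forall i, i \in V -> x i = aff a b p i.

Definition max_rank_psd_stress V E p w : Prop :=
  [/\ stress_fun V E p w, psd_form w & ker_affine V p w].

Lemma stress_matrix_mx_of_form V E p w :
  stress_fun V E p w -> stress_matrix E p (mx_of_form V w).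
Proof.
case=> wsym wV wE w1 wp; have wV' i j : j \notin V -> w i j = 0 by rewrite wsym; apply: wV.
split=> [a b | a b ab | a | a]; rewrite ?mxE.
- by rewrite wsym.
- by apply: wE; apply: contra ab => /eqP /enum_val_inj ->.
- rewrite -[RHS](w1 (vtx a)) [RHS](sum_vtx (V := V)) => [|j /wV' //].
  by apply: eq_bigr => b _; rewrite mxE.
- rewrite -[RHS](wp (vtx a)) [RHS](sum_vtx (V := V)) => [|j /wV' ->]; last by rewrite scale0r.
  by apply: eq_bigr => b _; rewrite mxE.
Qed.

Lemma stress_fun_form_of_mx V E p (Om : 'M[R]_#|V|) :
  stress_matrix E p Om -> stress_fun V E p (form_of_mx Om).
Proof.
case=> Osym OE O1 Op.
have wV' i j : j \notin V -> form_of_mx Om i j = 0.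
  by move=> jV; rewrite /form_of_mx (vtx_pick_notin jV); case: (vtx_pick V i).
split=> [i j | i j | i j ij ijE | i | i].
- by rewrite /form_of_mx; case: (vtx_pick V i) => [a|]; case: (vtx_pick V j).
- exact: form_of_mx_notin.
- rewrite /form_of_mx; case ei: (vtx_pick V i) => [a|//]; case ej: (vtx_pick V j) => [b|//].
  apply: OE; last by rewrite (vtx_pickK ei) (vtx_pickK ej).
  by apply: contra ij => /eqP ab; rewrite -(vtx_pickK ei) -(vtx_pickK ej) ab.
- case iV: (i \in V); last by apply: big1 => j _; rewrite form_of_mx_notin ?iV.
  rewrite -(enum_rankK_in iV iV) (sum_vtx (V := V)) => [|j /wV' //].
  by rewrite -[RHS](O1 (enum_rank_in iV i)); apply: eq_bigr => b _; rewrite form_of_mx_vtx.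
- case iV: (i \in V); last by apply: big1 => j _; rewrite form_of_mx_notin ?iV ?scale0r.
  rewrite -(enum_rankK_in iV iV) (sum_vtx (V := V)) => [|j /wV' ->]; last by rewrite scale0r.
  by rewrite -[RHS](Op (enum_rank_in iV i)); apply: eq_bigr => b _; rewrite form_of_mx_vtx.
Qed.

Lemma stress_matrix_affine_basis V E p (Om : 'M[R]_#|V|) :
  stress_matrix E p Om -> affine_basis V p *m Om = 0.
Proof.
case=> Osym _ O1 Op; rewrite /affine_basis mul_col_mx.
have -> : (const_mx 1 : 'M[R]_(1, #|V|)) *m Om = 0.
  apply/rowP => a; rewrite !mxE -[RHS](O1 a); apply: eq_bigr => b _.
  by rewrite mxE mul1r Osym.
have -> : \matrix_(k, a) p (vtx a) 0 k *m Om = 0.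
  apply/matrixP => k a; rewrite !mxE.
  transitivity ((\sum_b Om a b *: p (vtx b)) 0 k); last by rewrite Op mxE.
  rewrite summxE; apply: eq_bigr => b _; by rewrite !mxE Osym mulrC.
by rewrite col_mx0.
Qed.

Lemma nullity_affine_basis V p (Om : 'M[R]_#|V|) :
  (affine_basis V p <= kermx Om)%MS -> row_free (affine_basis V p) ->
  nullity Om = d.+1 <-> (kermx Om <= affine_basis V p)%MS.
Proof.
move=> WO Wfree; have rW : \rank (affine_basis V p) = d.+1 by apply/eqP.
have := mxrank_leqif_eq WO; rewrite rW /nullity => -[_ eqW].
split=> [nul | KW]; first by move: eqW; rewrite nul eqxx => /esym/andP[].
by apply/eqP; rewrite -rW eqn_leq !mxrankS.
Qed.

Lemma kermx_affine_basisP V p w :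
  (forall i j, w i j = w j i) -> (forall i j, i \notin V -> w i j = 0) ->
  (kermx (mx_of_form V w) <= affine_basis V p)%MS <-> ker_affine V p w.
Proof.
move=> wsym wV; split=> [KW x wx | wker].
  have /sub_affine_basisP[a [b xab]] : (\row_b x (vtx b) <= affine_basis V p)%MS.
    apply: submx_trans KW; apply/sub_kermxP/rowP => a.
    by rewrite mulmx_row_mx_of_form // wx mxE.
  exists a, b => i iV; have := xab (enum_rank_in iV i).
  by rewrite mxE /vtx enum_rankK_in.
apply/row_subP => r; set z := row r _.
have /(mx_of_form_ker wsym wV) /wker[a [b xab]] : z *m mx_of_form V w = 0.
  by rewrite /z -row_mul mulmx_ker row0.
by apply/sub_affine_basisP; exists a, b => c; rewrite -row_ext_vtx xab // enum_valP.
Qed.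

Lemma has_psd_stress_nullityP V S E p :
  S \subset V -> #|S| = d.+1 -> aff_indep p S ->
  has_psd_stress_nullity V E p d.+1 <-> exists w, max_rank_psd_stress V E p w.
Proof.
move=> SV cS ind; have Wfree := affine_basis_free SV cS ind.
have WO Om : stress_matrix E p Om -> (affine_basis V p <= kermx Om)%MS.
  by move=> st; apply/sub_kermxP; apply: stress_matrix_affine_basis st.
split=> [[Om [st ps nul]] | [w [st ps ker]]].
  have st' := stress_fun_form_of_mx st; case: (st') => wsym wV _ _ _.
  exists (form_of_mx Om); split => //.
    by apply/(psd_mx_of_form wsym wV); rewrite form_of_mxK; apply/psd_formE.
  apply/(kermx_affine_basisP _ wsym wV); rewrite form_of_mxK.
  exact/(nullity_affine_basis (WO _ st) Wfree).
have st' := stress_matrix_mx_of_form st; case: (st) => wsym wV _ _ _.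
exists (mx_of_form V w); split => //.
  by apply/psd_formE/(psd_mx_of_form wsym wV).
apply/(nullity_affine_basis (WO _ st') Wfree).
exact/(kermx_affine_basisP _ wsym wV).
Qed.

End Stresses.

Lemma exists_nat_nonroot (R : realType) (q : {poly R}) : q != 0 ->
  exists i : nat, ~~ root q i%:R.
Proof.
move=> q0; set rs := [seq i%:R | i <- iota 0 (size q)] : seq R.
have [allr|/allPn[_ /mapP[i _ ->] nr]] := boolP (all (root q) rs); last by exists i.
have uq : uniq rs by rewrite map_inj_uniq ?iota_uniq // => i j /eqP; rewrite eqr_nat => /eqP.
by have := max_poly_roots q0 allr uq; rewrite size_map size_iota ltnn.
Qed.

Section InfinitesimalRigidity.
Variables (R : realType) (T : finType) (d : nat).
Implicit Types (V S : {set T}) (E : {set {set T}}) (p u : T -> 'rV[R]_d).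

Lemma aff_mx_perturb x0 S p u e :
  aff_mx x0 S (fun i => p i + e *: u i) =
  aff_mx x0 S p + e *: (aff_mx x0 S u - aff_mx x0 S (fun=> 0)).
Proof.
apply/matrixP => a k; rewrite !mxE; case: splitP => j _; rewrite !mxE; ring.
Qed.

Definition aff_poly_mx x0 S p u : 'M[{poly R}]_d.+1 :=
  \matrix_(a, k) ((aff_mx x0 S p a k)%:P +
                  'X * ((aff_mx x0 S u - aff_mx x0 S (fun=> 0)) a k)%:P).

Lemma horner_det_aff_poly_mx x0 S p u e :
  (\det (aff_poly_mx x0 S p u)).[e] = \det (aff_mx x0 S (fun i => p i + e *: u i)).
Proof.
rewrite -horner_evalE -det_map_mx aff_mx_perturb; congr (\det _).
apply/matrixP => a k; rewrite !mxE /=; case: splitP => j _;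
by rewrite !mxE /= horner_evalE hornerD hornerC hornerM hornerX hornerC.
Qed.

(* The parameters e excluded are the roots of the nonzero polynomial
   'X * prod_S det (aff_poly_mx S), which some natural number avoids. *)
Lemma general_position_perturb (x0 : T) V p u : general_position V p ->
  exists e : R, e != 0 /\ general_position V (fun i => p i + e *: u i).
Proof.
move=> gp.
pose P S := (S \subset V) && (#|S| == d.+1).
set Q := 'X * \prod_(S | P S) \det (aff_poly_mx x0 S p u).
have det_neq0 S : P S -> \det (aff_poly_mx x0 S p u) != 0.
  move=> /andP[SV /eqP cS]; apply/eqP => /(congr1 (horner^~ 0)) /eqP.
  rewrite /= horner_det_aff_poly_mx horner0 aff_mx_perturb scale0r addr0; apply/negP.
  by rewrite -unitfE -unitmxE -row_free_unit -(aff_indep_mxP x0 _ cS); apply: gp.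
have : Q != 0 by rewrite mulf_neq0 ?polyX_eq0 //; apply/prodf_neq0.
move=> /exists_nat_nonroot[i iQ].
exists i%:R; split.
  by apply: contraNneq iQ => ->; rewrite /root /Q hornerM hornerX mul0r.
move=> S SV cS; apply/(aff_indep_mxP x0 _ cS).
rewrite row_free_unit unitmxE unitfE -horner_det_aff_poly_mx.
move: iQ; rewrite /root /Q hornerM horner_prod mulf_eq0 negb_or => /andP[_].
by move/prodf_neq0 => /(_ S); apply; rewrite /P SV cS eqxx.
Qed.

(* Half the derivative at t = 0 of sqdist (p i + t u i) (p j + t u j). *)
Definition sqdist_deriv p u i j : R :=
  \sum_k (p i 0 k - p j 0 k) * (u i 0 k - u j 0 k).

Lemma sqdist_pm p u e i j :
  sqdist (p i - e *: u i) (p j - e *: u j) =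
  sqdist (p i + e *: u i) (p j + e *: u j) - e * 4 * sqdist_deriv p u i j.
Proof.
rewrite /sqdist /sqdist_deriv mulr_sumr -sumrB; apply: eq_bigr => k _.
rewrite !mxE; ring.
Qed.

Definition inf_rigid V E p : Prop :=
  forall u, (forall i j, i \in V -> j \in V -> [set i; j] \in E -> sqdist_deriv p u i j = 0) ->
  forall i j, i \in V -> j \in V -> sqdist_deriv p u i j = 0.

(* If u is an infinitesimal flex of G(p), then p + e u and p - e u have the same
   edge lengths, and p + e u is in general position for a suitable e != 0. *)
Lemma univ_rigid_inf_rigid V E p :
  univ_rigid_graph R d V E -> general_position V p -> inf_rigid V E p.
Proof.
move=> ur gp u uE i j iV jV.
have [e [e0 gpe]] := general_position_perturb i u gp.
have := ur _ gpe d (fun a => p a - e *: u a) (leqnn d).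
have edges a b : a \in V -> b \in V -> [set a; b] \in E ->
    sqdist (p a - e *: u a) (p b - e *: u b) = sqdist (p a + e *: u a) (p b + e *: u b).
  by move=> aV bV ab; rewrite sqdist_pm uE // mulr0 subr0.
move=> /(_ edges i j iV jV); rewrite sqdist_pm => h.
have /eqP : e * 4 * sqdist_deriv p u i j = 0 by lra.
by rewrite !mulf_eq0 (negbTE e0) pnatr_eq0 => /eqP.
Qed.

End InfinitesimalRigidity.

Section RigidityMatrix.
Variables (R : realType) (T : finType) (d : nat).
Implicit Types (V : {set T}) (E : {set {set T}}) (p : T -> 'rV[R]_d).

(* The row of the rigidity matrix for the pair {a, b}, with R^(T x d) flattened by
   mxvec. *)
Definition rigidity_row p (a b : T) : 'rV[R]_(#|T| * d) :=
  mxvec (\matrix_(i, k) (((enum_val i == a)%:R - (enum_val i == b)%:R) *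
                         (p a 0 k - p b 0 k))).

Definition col_motion m (M : 'M[R]_(#|T| * d, m)) (l : 'I_m) : T -> 'rV[R]_d :=
  fun i => \row_k M (mxvec_index (enum_rank i) k) l.

Lemma sum_enum_val_eq (F : 'I_#|T| -> R) (c : R) (a : T) :
  \sum_i (enum_val i == a)%:R * c * F i = c * F (enum_rank a).
Proof.
rewrite (bigD1 (enum_rank a)) //= enum_rankK eqxx mul1r big1 ?addr0 // => i ia.
have /negbTE -> : enum_val i != a by apply: contra ia => /eqP <-; rewrite enum_valK.
by rewrite !mul0r.
Qed.

Lemma rigidity_row_mul p a b m (M : 'M[R]_(#|T| * d, m)) l :
  (rigidity_row p a b *m M) 0 l = sqdist_deriv p (col_motion M l) a b.
Proof.
transitivity (\sum_i \sum_k ((enum_val i == a)%:R - (enum_val i == b)%:R) *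
    (p a 0 k - p b 0 k) * M (mxvec_index i k) l).
  rewrite pair_bigA mxE (reindex _ (curry_mxvec_bij _ _)) /=.
  by apply: eq_bigr => -[i k] _; rewrite mxvecE mxE.
rewrite exchange_big /sqdist_deriv; apply: eq_bigr => k _.
under eq_bigr => i _ do rewrite mulrBl mulrBl.
by rewrite sumrB !sum_enum_val_eq !mxE; ring.
Qed.

(* Fredholm alternative: the cokernel of the rigidity matrix of E consists of the
   infinitesimal flexes, which infinitesimal rigidity makes orthogonal to every
   rigidity row of a pair within V. *)
Lemma rigidity_rows_span V E p (w : T -> T -> R) : inf_rigid V E p ->
  (forall i j, i \notin V -> w i j = 0) -> (forall i j, j \notin V -> w i j = 0) ->
  exists mu : T -> T -> R, (forall a b, [set a; b] \notin E -> mu a b = 0) /\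
    \sum_(ab : T * T) mu ab.1 ab.2 *: rigidity_row p ab.1 ab.2 =
    \sum_(ab : T * T) w ab.1 ab.2 *: rigidity_row p ab.1 ab.2.
Proof.
move=> infr wl wr.
pose Rm : 'M[R]_(#|{: T * T}|, #|T| * d) := \matrix_(y, x)
  (if [set (enum_val y).1; (enum_val y).2] \in E
   then rigidity_row p (enum_val y).1 (enum_val y).2 0 x else 0).
set M := cokermx Rm.
have flexM a b l : a \in V -> b \in V -> sqdist_deriv p (col_motion M l) a b = 0.
  move=> aV bV; apply: infr => // i j _ _ ij; rewrite -rigidity_row_mul.
  have <- : row (enum_rank (i, j)) Rm = rigidity_row p i j.
    by apply/rowP => x; rewrite !mxE enum_rankK /= ij.
  by rewrite -row_mul mulmx_coker row0 mxE.
set r := \sum_(ab : T * T) _.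
have : (r <= Rm)%MS.
  rewrite submxE; apply/eqP/rowP => l; rewrite mulmx_suml summxE [RHS]mxE.
  apply: big1 => -[a b] _ /=; rewrite -scalemxAl mxE rigidity_row_mul.
  case aV: (a \in V); last by rewrite wl ?mul0r // aV.
  case bV: (b \in V); last by rewrite wr ?mul0r // bV.
  by rewrite flexM ?mulr0.
case/submxP=> D ->.
exists (fun a b => if [set a; b] \in E then D 0 (enum_rank (a, b)) else 0); split.
  by move=> a b /negbTE ->.
apply/rowP => x; rewrite mxE summxE (reindex enum_rank (onW_bij _ (enum_rank_bij _))).
apply: eq_bigr => -[a b] _; rewrite !mxE enum_rankK /=.
by case: ifP => _; rewrite ?mulr0 ?mul0r.
Qed.

Lemma rigidity_rows_equilibrium p (nu : T -> T -> R) :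
  \sum_(ab : T * T) nu ab.1 ab.2 *: rigidity_row p ab.1 ab.2 = 0 ->
  forall i, \sum_j (nu i j + nu j i) *: (p i - p j) = 0.
Proof.
move=> nu0 i; apply/rowP => k; rewrite summxE.
transitivity ((\sum_(ab : T * T) nu ab.1 ab.2 *: rigidity_row p ab.1 ab.2) 0
                (mxvec_index (enum_rank i) k)); last by rewrite nu0 !mxE.
rewrite summxE; under [RHS]eq_bigr => ab _ do rewrite mxE mxvecE mxE enum_rankK.
rewrite -(pair_bigA _ (fun a b => nu a b *
   (((i == a)%:R - (i == b)%:R) * (p a 0 k - p b 0 k)))) /=.
set G := fun a b => nu a b * (p a 0 k - p b 0 k).
transitivity (\sum_a \sum_b G a b * (a == i)%:R - \sum_a \sum_b G a b * (b == i)%:R).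
  rewrite [X in _ = _ - X]exchange_big /=.
  under [in RHS]eq_bigr do rewrite -mulr_suml.
  under [X in _ = _ - X]eq_bigr do rewrite -mulr_suml.
  rewrite !sum_delta -sumrB; apply: eq_bigr => j _; rewrite /G !mxE; ring.
rewrite -sumrB; apply: eq_bigr => a _; rewrite -sumrB; apply: eq_bigr => b _.
by rewrite /G [i == a]eq_sym [i == b]eq_sym; ring.
Qed.

End RigidityMatrix.

Lemma edge_vertices (T : finType) (V : {set T}) (E : {set {set T}}) i j :
  is_graph V E -> [set i; j] \in E -> (i \in V) && (j \in V).
Proof. by move=> gE /gE[_ /subsetP sub]; rewrite !sub // !inE eqxx ?orbT. Qed.

Section StressConstructions.
Variables (R : realType) (T : finType) (d : nat).
Implicit Types (V : {set T}) (E : {set {set T}}) (p q : T -> 'rV[R]_d) (w : T -> T -> R).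

Lemma stress_fun_config V E p q w :
  (forall i, i \in V -> q i = p i) -> stress_fun V E p w -> stress_fun V E q w.
Proof.
move=> qp [wsym wV wE w1 wp]; split=> // i; rewrite -[RHS](wp i).
apply: eq_bigr => j _; case jV: (j \in V); first by rewrite qp.
by rewrite wsym wV ?jV // !scale0r.
Qed.

Lemma stress_fun_sub V V' E E' p w : V \subset V' -> E \subset E' ->
  stress_fun V E p w -> stress_fun V' E' p w.
Proof.
move=> VV' EE' [wsym wV wE w1 wp]; split=> // i j.
  by move=> iV'; apply: wV; apply: contra iV' => /(subsetP VV').
by move=> ij ijE; apply: wE ij _; apply: contra ijE => /(subsetP EE').
Qed.

Lemma stress_funD V E p w1 w2 : stress_fun V E p w1 -> stress_fun V E p w2 ->
  stress_fun V E p (fun i j => w1 i j + w2 i j).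
Proof.
move=> [s1 V1 E1 r1 p1] [s2 V2 E2 r2 p2]; split=> [i j | i j iV | i j ij ijE | i | i].
- by rewrite s1 s2.
- by rewrite V1 ?V2 ?addr0.
- by rewrite E1 ?E2 ?addr0.
- by rewrite big_split /= r1 r2 addr0.
- by under eq_bigr do rewrite scalerDl; rewrite big_split /= p1 p2 addr0.
Qed.

Lemma stress_funZ V E p w c : stress_fun V E p w -> stress_fun V E p (fun i j => c * w i j).
Proof.
move=> [s1 V1 E1 r1 p1]; split=> [i j | i j iV | i j ij ijE | i | i].
- by rewrite s1.
- by rewrite V1 ?mulr0.
- by rewrite E1 ?mulr0.
- by rewrite -mulr_sumr r1 mulr0.
- by under eq_bigr do rewrite -scalerA; rewrite -scaler_sumr p1 scaler0.
Qed.

Lemma stress_fun_setD V E (F : {set {set T}}) p w : stress_fun V E p w ->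
  (forall i j, i != j -> [set i; j] \in F -> w i j = 0) -> stress_fun V (E :\: F) p w.
Proof.
move=> [wsym wV wE w1 wp] wF; split=> // i j ij.
by rewrite in_setD negb_and negbK => /orP[/(wF _ _ ij) | /(wE _ _ ij)].
Qed.

Lemma max_rank_ker_sub V E E' p w c :
  max_rank_psd_stress V E p w -> stress_fun V E' p c ->
  forall x, (forall i, \sum_j w i j * x j = 0) -> forall i, \sum_j c i j * x j = 0.
Proof.
move=> [_ _ wker] [csym cV _ c1 cp] x /wker[a [b xab]] i.
rewrite -[RHS](equilibrium_aff a b c1 cp i); apply: eq_bigr => j _.
case jV: (j \in V); first by rewrite xab.
by rewrite csym cV ?jV // !mul0r.
Qed.

(* The stress matrix of an equilibrium stress w: off-diagonal entries w i j,
   diagonal entries - \sum_(l != i) w i l. *)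
Definition stress_laplacian w i j : R := w i j - (i == j)%:R * \sum_l w i l.

Lemma stress_laplacian_neq w i j : i != j -> stress_laplacian w i j = w i j.
Proof. by move=> /negbTE ij; rewrite /stress_laplacian ij mul0r subr0. Qed.

Lemma stress_fun_laplacian V E p w :
  (forall i j, w i j = w j i) -> (forall i j, i \notin V -> w i j = 0) ->
  (forall i j, i != j -> [set i; j] \notin E -> w i j = 0) ->
  (forall i, \sum_j w i j *: (p i - p j) = 0) ->
  stress_fun V E p (stress_laplacian w).
Proof.
move=> wsym wV wE weq; rewrite /stress_laplacian.
have diag i : \sum_j (i == j)%:R * \sum_l w i l = \sum_l w i l.
  rewrite [LHS](bigD1 i) //= eqxx mul1r [X in _ + X]big1 ?addr0 // => j.
  by rewrite eq_sym => /negbTE ->; rewrite mul0r.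
split=> [i j | i j iV | i j ij ijE | i | i].
- by case: (eqVneq i j) => [->|ij] //; rewrite !mul0r wsym.
- have -> : \sum_l w i l = 0 by apply: big1 => l _; apply: wV.
  by rewrite wV // mulr0 subr0.
- by rewrite (negbTE ij) mul0r subr0 wE.
- by rewrite sumrB diag subrr.
- transitivity (- \sum_j w i j *: (p i - p j)); last by rewrite weq oppr0.
  under eq_bigr do rewrite scalerBl -scalerA.
  rewrite (eq_bigr _ (fun j _ => scalerBr (w i j) (p i) (p j))) !sumrB opprB.
  by rewrite -scaler_suml sum_deltaZ.
Qed.

(* Every symmetric load on V becomes an equilibrium stress after changing it on the
   edges of an infinitesimally rigid framework; halving w accounts for the two
   orientations of each pair. *)
Lemma inf_rigid_stress_completion V E p w :
  is_graph V E -> inf_rigid V E p ->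
  (forall i j, w i j = w j i) -> (forall i j, i \notin V -> w i j = 0) ->
  exists Om : T -> T -> R,
    [/\ forall i j, Om i j = Om j i, forall i j, i \notin V -> Om i j = 0,
        forall i j, [set i; j] \notin E -> Om i j = w i j &
        forall i, \sum_j Om i j *: (p i - p j) = 0].
Proof.
move=> gE infr wsym wV.
have wV2 i j : i \notin V -> w i j / 2 = 0 by move=> iV; rewrite wV ?mul0r.
have wV2' i j : j \notin V -> w i j / 2 = 0 by move=> jV; rewrite wsym wV2.
have [mu [muE mu_w]] := rigidity_rows_span infr wV2 wV2'.
pose nu i j := w i j / 2 - mu i j.
have nu0 : \sum_(ab : T * T) nu ab.1 ab.2 *: rigidity_row p ab.1 ab.2 = 0.
  by under eq_bigr do rewrite scalerBl; rewrite sumrB mu_w subrr.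
have notE i j : i \notin V -> [set i; j] \notin E.
  by move=> iV; apply: contra iV => /(edge_vertices gE) /andP[].
have notE' i j : i \notin V -> [set j; i] \notin E by move=> iV; rewrite setUC notE.
exists (fun i j => nu i j + nu j i); split.
- by move=> i j; rewrite addrC.
- move=> i j iV; rewrite /nu (muE i j) ?notE // (muE j i) ?notE' //.
  by rewrite wV2 // wV2' // !subr0 addr0.
- move=> i j ijE; rewrite /nu (muE i j) // (muE j i) 1?setUC // wsym; lra.
- exact: rigidity_rows_equilibrium.
Qed.

End StressConstructions.

(* The load -wB on F is completed to an equilibrium stress of p^A using the edges of
   G_A; its kernel contains the affine functions, i.e. that of wA, whence the lower
   bound. *)
Lemma correction_stress (R : realType) (T : finType) (d : nat) (VA : {set T})
    (EA F : {set {set T}}) (pA : T -> 'rV[R]_d) (wA wB : T -> T -> R) :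
  is_graph VA EA -> inf_rigid VA EA pA -> max_rank_psd_stress VA EA pA wA ->
  (forall i j, wB i j = wB j i) -> (forall e, e \in F -> e \subset VA) ->
  exists C K, [/\ stress_fun VA (EA :|: F) pA C,
    forall i j, i != j -> [set i; j] \in F -> [set i; j] \notin EA -> C i j = - wB i j &
    forall x, - (K * bilin wA x x) <= bilin C x x].
Proof.
move=> gA infr mA wBsym FA.
pose w i j := if [set i; j] \in F then - wB i j else 0.
have wsym i j : w i j = w j i by rewrite /w setUC wBsym.
have wV i j : i \notin VA -> w i j = 0.
  move=> iV; rewrite /w; case: ifP => // /FA /subsetP /(_ i).
  by rewrite !inE eqxx (negbTE iV) => /(_ isT).
have [Om [Osym OV OE Oeq]] := inf_rigid_stress_completion gA infr wsym wV.
have stC : stress_fun VA (EA :|: F) pA (stress_laplacian Om).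
  apply: stress_fun_laplacian => // i j _; rewrite inE negb_or => /andP[ijA ijF].
  by rewrite OE // /w (negbTE ijF).
have [[wAsym wAV _ _ _] wApsd _] := mA; have [Csym CV _ _ _] := stC.
have [K CK] := psd_form_dominates wAsym wAV Csym CV wApsd (max_rank_ker_sub mA stC).
exists (stress_laplacian Om), K; split => // i j ij ijF ijA.
by rewrite stress_laplacian_neq // OE // /w ijF.
Qed.

Section Attachment.
Variables (R : realType) (T : finType) (d : nat).
Variables (VA VB S : {set T}) (EA EB : {set {set T}}) (pA pB : T -> 'rV[R]_d).
Variables (wA wB C : T -> T -> R) (K : R).

Let F := removed_edges VA VB EA EB.
Let p := attach_config VA pA pB.

Hypotheses (SA : S \subset VA) (SB : S \subset VB) (cardS : #|S| = d.+1).
Hypotheses (indA : aff_indep pA S) (agree : forall i, i \in VA :&: VB -> pA i = pB i).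
Hypotheses (mA : max_rank_psd_stress VA EA pA wA) (mB : max_rank_psd_stress VB EB pB wB).
Hypotheses (stC : stress_fun VA (EA :|: F) pA C)
  (CF : forall i j, i != j -> [set i; j] \in F -> [set i; j] \notin EA -> C i j = - wB i j)
  (CK : forall x, - (K * bilin wA x x) <= bilin C x x).

Definition attach_stress i j := (K + 1) * wA i j + wB i j + C i j.

Lemma attach_configA i : i \in VA -> p i = pA i.
Proof. by rewrite /p /attach_config => ->. Qed.

Lemma attach_configB i : i \in VB -> p i = pB i.
Proof.
rewrite /p /attach_config; case: ifP => // iA iB.
by apply: agree; rewrite inE iA.
Qed.

Lemma attach_stress_fun :
  stress_fun (VA :|: VB) (attach_edges VA VB EA EB) p attach_stress.
Proof.
have FB : F \subset EB by apply/subsetP => e; rewrite inE => /andP[].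
have [stA _ _] := mA; have [stB _ _] := mB.
rewrite /attach_edges; apply: stress_fun_setD.
  apply: stress_funD; first apply: stress_funD.
  - apply: stress_fun_sub (subsetUl _ _) (subsetUl _ _) _.
    exact: stress_funZ (stress_fun_config attach_configA stA).
  - exact: stress_fun_sub (subsetUr _ _) (subsetUr _ _) (stress_fun_config attach_configB stB).
  - exact: stress_fun_sub (subsetUl _ _) (setUS _ FB) (stress_fun_config attach_configA stC).
move=> i j ij ijF.
have ijA : [set i; j] \notin EA by move: ijF; rewrite inE => /and3P[].
have [_ _ wAE _ _] := stA.
by rewrite /attach_stress wAE // CF // mulr0 add0r addrN.
Qed.

Lemma bilin_attach_stress x :
  bilin attach_stress x x = bilin wA x x + bilin wB x x + (bilin C x x + K * bilin wA x x).
Proof. by rewrite /attach_stress !bilin_addM bilin_scaleM; ring. Qed.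

Lemma attach_psd : psd_form attach_stress.
Proof.
have [_ wApsd _] := mA; have [_ wBpsd _] := mB.
move=> x; rewrite bilin_attach_stress; have := CK x; have := wApsd x; have := wBpsd x.
lra.
Qed.

Lemma attach_ker_affine : ker_affine (VA :|: VB) p attach_stress.
Proof.
have [[wAsym _ _ _ _] wApsd wAker] := mA; have [[wBsym _ _ _ _] wBpsd wBker] := mB.
move=> x xk.
have q0 : bilin attach_stress x x = 0 by rewrite bilin_diag big1 // => i _; rewrite xk mulr0.
move: q0; rewrite bilin_attach_stress => q0.
have := CK x; have := wApsd x; have := wBpsd x => qB qA qC.
have [aA [bA xA]] : exists a b, forall i, i \in VA -> x i = aff a b pA i.
  by apply/wAker/(psd_form_ker wAsym wApsd); lra.
have [aB [bB xB]] : exists a b, forall i, i \in VB -> x i = aff a b pB i.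
  by apply/wBker/(psd_form_ker wBsym wBpsd); lra.
have [/subr0_eq ea /subr0_eq eb] : aA - aB = 0 /\ bA - bB = 0.
  apply: (aff_eq0 cardS indA) => i iS; have iAB : i \in VA :&: VB by rewrite inE !(subsetP _ _ iS).
  rewrite -aff_sub -xA ?(subsetP SA) // /aff agree // -/(aff aB bB pB i) -xB ?(subsetP SB) //.
  exact: subrr.
exists aA, bA => i; rewrite inE => /orP[iA | iB]; first by rewrite xA // /aff attach_configA.
by rewrite xB // /aff attach_configB // ea eb.
Qed.

Lemma attach_max_rank :
  max_rank_psd_stress (VA :|: VB) (attach_edges VA VB EA EB) p attach_stress.
Proof. by split; [apply: attach_stress_fun | apply: attach_psd | apply: attach_ker_affine]. Qed.

End Attachment.

Lemma exists_subset_card (T : finType) (X : {set T}) n :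
  (n <= #|X|)%N -> exists2 S : {set T}, S \subset X & #|S| = n.
Proof.
move=> nX; exists [set x in take n (enum X)].
  by apply/subsetP => x; rewrite inE => /mem_take; rewrite mem_enum.
rewrite cardsE; move/card_uniqP: (take_uniq n (enum_uniq X)) => ->.
by rewrite size_takel // -cardE.
Qed.

Lemma eq_aff_indep (R : realType) (T : finType) (d : nat) (S : {set T})
  (p q : T -> 'rV[R]_d) :
  (forall i, i \in S -> p i = q i) -> aff_indep p S -> aff_indep q S.
Proof.
move=> pq ind lam lam1 lamq; apply: ind => //; rewrite -[RHS]lamq.
by apply: eq_bigr => i iS; rewrite pq.
Qed.

Unset Implicit Arguments.

Theorem theorem8 (R : realType) (T : finType) (d : nat)
  (VA VB : {set T}) (EA EB : {set {set T}}) (pA pB : T -> 'rV[R]_d) :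
  (1 <= d)%N ->
  is_graph VA EA -> is_graph VB EB ->
  univ_rigid_graph R d VA EA -> univ_rigid_graph R d VB EB ->
  general_position VA pA -> general_position VB pB ->
  (VA :&: VB) \proper VA -> (VA :&: VB) \proper VB ->
  (d.+1 <= #|VA :&: VB|)%N ->
  (forall i, i \in VA :&: VB -> pA i = pB i) ->
  has_psd_stress_nullity VA EA pA d.+1 ->
  has_psd_stress_nullity VB EB pB d.+1 ->
  has_psd_stress_nullity (VA :|: VB) (attach_edges VA VB EA EB)
    (attach_config VA pA pB) d.+1.
Proof.
move=> _ gA _ urA _ gpA _ _ _ cardC agree hA hB.
have [S SC cS] := exists_subset_card cardC.
have SA : S \subset VA := subset_trans SC (subsetIl _ _).
have SB : S \subset VB := subset_trans SC (subsetIr _ _).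
have indA : aff_indep pA S := gpA S SA cS.
have indB : aff_indep pB S.
  by apply: eq_aff_indep indA => i /(subsetP SC); apply: agree.
have [wA mA] := (has_psd_stress_nullityP _ SA cS indA).1 hA.
have [wB mB] := (has_psd_stress_nullityP _ SB cS indB).1 hB.
have [[wBsym _ _ _ _] _ _] := mB.
have FA e : e \in removed_edges VA VB EA EB -> e \subset VA.
  by rewrite inE => /and3P[_ _ /subset_trans]; apply; apply: subsetIl.
have [C [K [stC CF CK]]] :=
  correction_stress gA (univ_rigid_inf_rigid urA gpA) mA wBsym FA.
apply/(has_psd_stress_nullityP _ (subset_trans SA (subsetUl _ _)) cS).
  by apply: eq_aff_indep indA => i /(subsetP SA) iA; rewrite /attach_config iA.
by exists (attach_stress wA wB C K); exact: attach_max_rank SA SB cS indA agree mA mB stC CF CK.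
Qed.
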